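(* Let $G_\pm(x)=|1+e^{2\pi i x}\pm e^{14\pi i x}|^2$ and $d(t)=\int_0^{1/2}\big[G_-^t(x)-G_+^t(x)\big]\,dx$ for $t>0$. Then $d'(5)>0$.
   Context: For $t>0$, $d^{(j)}(t)=\int_0^{1/2}G_-^t\log^jG_-\,dx-\int_0^{1/2}G_+^t\log^jG_+\,dx$. *)

From Stdlib Require Import Reals.
From Coquelicot Require Import Coquelicot.
Open Scope R_scope.

Definition cis (th : R) : C := (cos th, sin th).

Definition Gminus (x : R) : R :=
  (Cmod (Cplus (Cplus 1 (cis (2 * PI * x))) (Copp (cis (14 * PI * x))))) ^ 2.

Definition Gplus (x : R) : R :=
  (Cmod (Cplus (Cplus 1 (cis (2 * PI * x))) (cis (14 * PI * x)))) ^ 2.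

(* a^t for a >= 0, t > 0, with the convention 0^t = 0
   (Stdlib's Rpower 0 t would give 1). *)
Definition rpow (a t : R) : R :=
  if Req_EM_T a 0 then 0 else Rpower a t.

Definition d (t : R) : R :=
  RInt (fun x => rpow (Gminus x) t - rpow (Gplus x) t) 0 (1 / 2).

From Stdlib Require Import Reals QArith Qreals ZArith Lra Lia List.
From Coquelicot Require Import Coquelicot.
Import ListNotations.
Open Scope R_scope.

(* Both G_- and G_+ are polynomials in c = cos (2 pi x), namely 3 + 2 T_1(c) -+ 2 (T_6(c) + T_7(c))
   with Chebyshev polynomials T_n, and they take values in (0, 9]. Differentiating under the
   integral sign, d'(5) is the integral over [0, 1/2] of G_-^5 ln G_- - G_+^5 ln G_+.
   On (0, 9] the function g^5 ln g lies within 10^-3 of an explicit rational polynomial P; this is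
   certified piecewise in exact rational arithmetic, bounding ln by its Taylor polynomials at a
   chain of nodes whose logarithms are themselves enclosed step by step from ln 1 = 0.
   Hence d'(5) >= int P(G_-) - int P(G_+) - 10^-3, and the right-hand side is an explicit
   rational number, since the integrals of cos (2 pi x)^n over [0, 1/2] satisfy Wallis'
   recursion; it is positive. *)

(* Polynomials are lists of rational coefficients, constant term first. *)
Fixpoint peval (p : list Q) (x : R) : R :=
  match p with [] => 0 | c :: p' => Q2R c + x * peval p' x end.

Fixpoint padd (p q : list Q) : list Q :=
  match p, q with
  | [], _ => q
  | _, [] => p
  | a :: p', b :: q' => Qred (a + b) :: padd p' q'
  end.

Definition pscale (c : Q) (p : list Q) : list Q := map (fun a => Qred (c * a)) p.

Fixpoint pmul (p q : list Q) : list Q :=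
  match p with [] => [] | a :: p' => padd (pscale a q) (0%Q :: pmul p' q) end.

Fixpoint pcomp (p s : list Q) : list Q :=
  match p with [] => [] | a :: p' => padd [a] (pmul s (pcomp p' s)) end.

Fixpoint pmonom (k : nat) (c : Q) : list Q :=
  match k with O => [c] | S k' => 0%Q :: pmonom k' c end.

Definition qeval (p : list Q) (x : Q) : Q :=
  fold_right (fun c acc => Qred (c + x * acc)) 0%Q p.

Lemma Q2R_Qred q : Q2R (Qred q) = Q2R q.
Proof. apply Qeq_eqR, Qred_correct. Qed.

Lemma Q2R_neg1 : Q2R (-1) = -1.
Proof. unfold Q2R; simpl; field. Qed.

Lemma peval_padd p q x : peval (padd p q) x = peval p x + peval q x.
Proof.
  revert q; induction p as [|a p IH]; intros [|b q]; cbn [padd peval]; try ring.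
  rewrite IH, Q2R_Qred, Q2R_plus; ring.
Qed.

Lemma peval_pscale c p x : peval (pscale c p) x = Q2R c * peval p x.
Proof.
  unfold pscale. induction p as [|a p IH]; cbn [map peval]; [ring|].
  rewrite IH, Q2R_Qred, Q2R_mult; ring.
Qed.

Lemma peval_pmul p q x : peval (pmul p q) x = peval p x * peval q x.
Proof.
  induction p as [|a p IH]; cbn [pmul peval]; [ring|].
  rewrite peval_padd, peval_pscale; cbn [peval]. rewrite IH, RMicromega.Q2R_0. ring.
Qed.

Lemma peval_pcomp p s x : peval (pcomp p s) x = peval p (peval s x).
Proof.
  induction p as [|a p IH]; cbn [pcomp peval]; [ring|].
  rewrite peval_padd, peval_pmul, IH; cbn [peval]; ring.
Qed.

Lemma peval_pmonom k c x : peval (pmonom k c) x = Q2R c * x ^ k.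
Proof.
  induction k as [|k IH]; cbn [pmonom peval pow]; [ring|].
  rewrite IH, RMicromega.Q2R_0; ring.
Qed.

Lemma Q2R_qeval p x : Q2R (qeval p x) = peval p (Q2R x).
Proof.
  unfold qeval. induction p as [|c p IH]; cbn [fold_right peval].
  - exact RMicromega.Q2R_0.
  - rewrite Q2R_Qred, Q2R_plus, Q2R_mult, IH. reflexivity.
Qed.

Lemma continuous_peval p x : continuous (peval p) x.
Proof.
  induction p as [|c p IH]; cbn [peval].
  - apply continuous_const.
  - apply (continuous_plus (fun _ => Q2R c)); [apply continuous_const|].
    apply (continuous_mult (K := R_AbsRing) (fun y => y)); [apply continuous_id|exact IH].
Qed.

Definition Qltb (a b : Q) : bool := negb (Qle_bool b a).

Lemma Qltb_R a b : Qltb a b = true -> Q2R a < Q2R b.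
Proof.
  unfold Qltb. intro H. apply Qlt_Rlt, Qnot_le_lt. intro H'.
  apply Qle_bool_iff in H'. rewrite H' in H. discriminate.
Qed.

Definition qmin0 (q : Q) : Q := if Qle_bool 0 q then 0%Q else q.

Lemma Q2R_qmin0 q : Q2R (qmin0 q) <= 0 /\ Q2R (qmin0 q) <= Q2R q.
Proof.
  unfold qmin0. destruct (Qle_bool 0 q) eqn:E.
  - apply RMicromega.Qle_true in E. rewrite RMicromega.Q2R_0 in *. lra.
  - assert (Hq : (q < 0)%Q).
    { apply Qnot_le_lt. intro H. apply Qle_bool_iff in H. congruence. }
    apply Qlt_Rlt in Hq. rewrite RMicromega.Q2R_0 in Hq. lra.
Qed.

(* Horner's scheme with every partial value replaced by its negative part: for t in [0, h] this
   can only lower the result. *)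
Fixpoint horner_lbound (r : list Q) (h : Q) : Q :=
  match r with [] => 0%Q | c :: r' => Qred (c + h * qmin0 (horner_lbound r' h)) end.

Lemma horner_lbound_le r h t : 0 <= t <= Q2R h -> Q2R (horner_lbound r h) <= peval r t.
Proof.
  intros Ht. induction r as [|c r IH]; cbn [horner_lbound peval].
  - rewrite RMicromega.Q2R_0; lra.
  - rewrite Q2R_Qred, Q2R_plus, Q2R_mult.
    destruct (Q2R_qmin0 (horner_lbound r h)) as [Hneg Hle].
    enough (Q2R h * Q2R (qmin0 (horner_lbound r h)) <= t * peval r t) by lra.
    apply Rle_trans with (t * Q2R (qmin0 (horner_lbound r h))); [nra|].
    apply Rmult_le_compat_l; lra.
Qed.

Definition nonneg_on (p : list Q) (a b : Q) : bool :=
  Qle_bool a b && Qle_bool 0 (horner_lbound (pcomp p [a; 1%Q]) (b - a)).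

Lemma nonneg_on_sound p a b x :
  nonneg_on p a b = true -> Q2R a <= x <= Q2R b -> 0 <= peval p x.
Proof.
  unfold nonneg_on. intros [_ H]%andb_true_iff Hx.
  apply RMicromega.Qle_true in H. rewrite RMicromega.Q2R_0 in H.
  replace x with (peval [a; 1%Q] (x - Q2R a))
    by (cbn [peval]; rewrite RMicromega.Q2R_1; ring).
  rewrite <- peval_pcomp.
  eapply Rle_trans; [exact H|]. apply horner_lbound_le.
  rewrite Q2R_minus; lra.
Qed.

Lemma last_cons {A : Type} (a d : A) l : last (a :: l) d = last l a.
Proof.
  revert a d; induction l as [|b l IH]; intros a d; [reflexivity|].
  change (last (b :: l) d = last (b :: l) a). rewrite !IH. reflexivity.
Qed.

Section Chain.

Variables (S : Type) (pos : S -> R) (Inv : S -> Prop) (step : S -> S -> bool).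
Variable P : R -> Prop.
Hypothesis step_Inv : forall s s', Inv s -> step s s' = true -> Inv s'.
Hypothesis step_cover : forall s s' x, Inv s -> step s s' = true ->
  Rmin (pos s) (pos s') <= x <= Rmax (pos s) (pos s') -> P x.

Fixpoint chain_ok (s : S) (l : list S) : bool :=
  match l with [] => true | s' :: l' => step s s' && chain_ok s' l' end.

(* Consecutive pieces share their endpoints, so they cover everything between the two ends of
   the chain, whatever its direction. *)
Lemma chain_cover l : forall s s', chain_ok s (s' :: l) = true -> Inv s ->
  forall x, Rmin (pos s) (pos (last l s')) <= x <= Rmax (pos s) (pos (last l s')) -> P x.
Proof.
  induction l as [|s'' l IH]; intros s s' Hok HI x Hx;
    cbn [chain_ok] in Hok; apply andb_true_iff in Hok as [Hstep Hok].
  - exact (step_cover s s' x HI Hstep Hx).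
  - rewrite last_cons in Hx.
    destruct (Rle_dec (Rmin (pos s) (pos s')) x) as [H1|H1];
      [destruct (Rle_dec x (Rmax (pos s) (pos s'))) as [H2|H2]|].
    + exact (step_cover s s' x HI Hstep (conj H1 H2)).
    + apply (IH s' s'' Hok (step_Inv s s' HI Hstep)).
      clear H1; revert Hx H2; unfold Rmin, Rmax; repeat destruct Rle_dec; lra.
    + apply (IH s' s'' Hok (step_Inv s s' HI Hstep)).
      revert Hx H1; unfold Rmin, Rmax; repeat destruct Rle_dec; lra.
Qed.

End Chain.

Arguments chain_ok {S} step s l.

Definition nonneg_chain (p : list Q) (a b : Q) (pts : list Q) : bool :=
  Qltb a b && chain_ok (nonneg_on p) a pts && Qle_bool b (last pts a).

Lemma nonneg_chain_sound p a b pts x :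
  nonneg_chain p a b pts = true -> Q2R a <= x <= Q2R b -> 0 <= peval p x.
Proof.
  unfold nonneg_chain. intros [[Hab Hok]%andb_true_iff Hb]%andb_true_iff Hx.
  apply Qltb_R in Hab. apply RMicromega.Qle_true in Hb.
  destruct pts as [|c pts]; [cbn [last] in Hb; lra|].
  apply (chain_cover Q Q2R (fun _ => True) (nonneg_on p) (fun x => 0 <= peval p x))
    with (s := a) (s' := c) (l := pts); auto.
  - intros s s' y _ Hs Hy. apply (nonneg_on_sound _ _ _ _ Hs).
    unfold nonneg_on in Hs. apply andb_true_iff in Hs as [Hle _].
    apply RMicromega.Qle_true in Hle. rewrite Rmin_left, Rmax_right in Hy; lra.
  - rewrite last_cons in Hb. pose proof (Rmin_l (Q2R a) (Q2R (last pts c))).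
    pose proof (Rmax_r (Q2R a) (Q2R (last pts c))). lra.
Qed.

Definition ln1p_coef (n : nat) : Q :=
  (if Nat.even n then 1 else -1)%Z # Pos.of_succ_nat n.

Fixpoint ln1p_taylor (n : nat) : list Q :=
  match n with O => [] | S n' => padd (ln1p_taylor n') (pmonom n (ln1p_coef n')) end.

Lemma Q2R_ln1p_coef n : Q2R (ln1p_coef n) * INR (S n) = (-1) ^ n.
Proof.
  assert (Hsign : forall n, IZR (if Nat.even n then 1%Z else (-1)%Z) = (-1) ^ n).
  { intro k. induction k as [|k IH]; [reflexivity|].
    rewrite Nat.even_succ, <- Nat.negb_even. simpl pow. rewrite <- IH.
    destruct (Nat.even k); simpl; ring. }
  unfold ln1p_coef, Q2R; cbn [Qnum Qden].
  rewrite Zpos_P_of_succ_nat, Hsign, INR_IZR_INZ, Nat2Z.inj_succ. field.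
  rewrite <- Nat2Z.inj_succ, <- INR_IZR_INZ. apply not_0_INR; lia.
Qed.

Lemma is_derive_ln1p_taylor n v : -1 < v ->
  is_derive (peval (ln1p_taylor n)) v ((1 - (- v) ^ n) / (1 + v)).
Proof.
  intros Hv. induction n as [|n IH]; cbn [ln1p_taylor].
  - replace ((1 - (- v) ^ 0) / (1 + v)) with 0 by (simpl; field; lra).
    exact (is_derive_const (K := R_AbsRing) (V := R_NormedModule) 0 v).
  - apply (is_derive_ext (fun x => peval (ln1p_taylor n) x + Q2R (ln1p_coef n) * x ^ S n)).
    { intro t. rewrite peval_padd, peval_pmonom. reflexivity. }
    replace ((1 - (- v) ^ S n) / (1 + v)) with
      ((1 - (- v) ^ n) / (1 + v) + Q2R (ln1p_coef n) * (INR (S n) * 1 * v ^ Init.Nat.pred (S n))).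
    2:{ cbn [Init.Nat.pred]. rewrite Rmult_1_r, <- Rmult_assoc, Q2R_ln1p_coef.
        rewrite <- Rpow_mult_distr. replace (-1 * v) with (- v) by ring. simpl. field. lra. }
    exact (is_derive_plus _ _ _ _ _ IH
      (is_derive_scal _ _ _ _ (is_derive_pow _ (S n) _ _ (is_derive_id v)))).
Qed.

Lemma peval_ln1p_taylor_0 n : peval (ln1p_taylor n) 0 = 0.
Proof.
  induction n as [|n IH]; cbn [ln1p_taylor peval]; [reflexivity|].
  rewrite peval_padd, peval_pmonom, IH. simpl; ring.
Qed.

Lemma ln1p_taylor_remainder n v : 0 <= v -> exists c, 0 <= c <= v /\
  ln (1 + v) - peval (ln1p_taylor n) v = (- c) ^ n / (1 + c) * v.
Proof.
  intros Hv.
  set (h := fun x => ln (1 + x) - peval (ln1p_taylor n) x).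
  assert (Hd : forall x, 0 <= x -> is_derive h x ((- x) ^ n / (1 + x))).
  { intros x Hx.
    assert (Hln : is_derive (fun x => ln (1 + x)) x (/ (1 + x))) by (auto_derive; [lra|field; lra]).
    assert (Hdiff := is_derive_minus _ _ _ _ _ Hln (is_derive_ln1p_taylor n x ltac:(lra))).
    replace ((- x) ^ n / (1 + x)) with (minus (/ (1 + x)) ((1 - (- x) ^ n) / (1 + x)));
      [exact Hdiff|unfold minus, plus, opp; simpl; field; lra]. }
  destruct (MVT_gen h 0 v (fun x => (- x) ^ n / (1 + x))) as [c [Hc Hmvt]].
  - intros x Hx. rewrite Rmin_left in Hx by lra. apply Hd; lra.
  - intros x Hx. rewrite Rmin_left in Hx by lra. apply continuity_pt_filterlim.
    apply (ex_derive_continuous (K := R_AbsRing) (V := R_NormedModule)).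
    eexists; apply Hd; lra.
  - rewrite Rmin_left, Rmax_right in Hc by lra. exists c. split; [exact Hc|].
    unfold h in Hmvt. rewrite Rplus_0_r, ln_1, peval_ln1p_taylor_0 in Hmvt. lra.
Qed.

Lemma ln1p_taylor_even_le n v : Nat.even n = true -> 0 <= v ->
  peval (ln1p_taylor n) v <= ln (1 + v).
Proof.
  intros [k ->]%Nat.even_spec Hv. destruct (ln1p_taylor_remainder (2 * k) v Hv) as [c [Hc E]].
  rewrite pow_mult in E. replace ((- c) ^ 2) with (c ^ 2) in E by ring.
  enough (0 <= (c ^ 2) ^ k / (1 + c) * v) by lra.
  apply Rmult_le_pos; [apply Rdiv_le_0_compat; [apply pow_le; nra|lra]|lra].
Qed.

Lemma ln1p_taylor_odd_ge n v : Nat.even n = false -> 0 <= v ->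
  ln (1 + v) <= peval (ln1p_taylor n) v.
Proof.
  intros Hodd Hv.
  assert (Hn : Nat.Odd n) by (apply Nat.odd_spec; unfold Nat.odd; rewrite Hodd; reflexivity).
  destruct Hn as [k ->]. destruct (ln1p_taylor_remainder (2 * k + 1) v Hv) as [c [Hc E]].
  rewrite pow_add, pow_mult in E. replace ((- c) ^ 2) with (c ^ 2) in E by ring.
  enough (0 <= (c ^ 2) ^ k * c / (1 + c) * v) by (rewrite pow_1 in E; nra).
  apply Rmult_le_pos; [|lra].
  apply Rdiv_le_0_compat; [apply Rmult_le_pos; [apply pow_le; nra|lra]|lra].
Qed.

(* A numerical fit of x^5 ln x on [0, 9]. *)
Definition x5lnx_approx : list Q :=
  [(-549#16777216); (5181#2097152); (-17684485#536870912); (3345118723#17179869184);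
   (-55221007973#68719476736); (63871482457#17592186044416); (28668747650719#35184372088832);
   (-515267357456111#2251799813685248); (2198474060975721#36028797018963968);
   (-15327052300022813#1152921504606846976); (5220160980023857#2305843009213693952);
   (-43388351093183633#147573952589676412928); (67073779620486837#2361183241434822606848);
   (-74480559567361011#37778931862957161709568); (112093023499862159#1208925819614629174706176);
   (-6390590781624423#2417851639229258349412352); (10661396183916991#309485009821345068724781056)].

Definition x5lnx_err : Q := 1 # 1000.
Definition x5lnx_lower : list Q := padd x5lnx_approx [(- x5lnx_err)%Q].
Definition x5lnx_upper : list Q := padd x5lnx_approx [x5lnx_err].

Definition x5lnx_bracketed (g : R) : Prop :=
  peval x5lnx_lower g <= g ^ 5 * ln g <= peval x5lnx_upper g.

(* On [a, b], with ln a known to lie in [l, u], write g = a (1 + v) with v in [0, b/a - 1] and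
   enclose ln (1 + v) between its Taylor polynomials of degrees 10 and 11. *)
Definition x5lnx_piece_ok (a b l u : Q) : bool :=
  let g := [a; a] in
  let g5 := pcomp (pmonom 5 1) g in
  let h := Qred (b / a - 1) in
  Qle_bool 0 (horner_lbound
    (padd (pmul g5 (padd [l] (ln1p_taylor 10))) (pscale (-1) (pcomp x5lnx_lower g))) h) &&
  Qle_bool 0 (horner_lbound
    (padd (pcomp x5lnx_upper g) (pscale (-1) (pmul g5 (padd [u] (ln1p_taylor 11))))) h).

Lemma ln_ratio a b : 0 < a -> 0 < b -> ln b = ln a + ln (1 + (b / a - 1)).
Proof.
  intros Ha Hb. replace (1 + (b / a - 1)) with (b / a) by ring.
  rewrite <- ln_mult by (try apply Rdiv_lt_0_compat; lra).
  f_equal. field. lra.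
Qed.

Lemma Q2R_ratio a b : 0 < Q2R a -> Q2R (b / a - 1) = Q2R b / Q2R a - 1.
Proof.
  intro Ha. assert (Hnz : ~ (a == 0)%Q).
  { intro E. apply Qeq_eqR in E. rewrite RMicromega.Q2R_0 in E. lra. }
  rewrite Q2R_minus, Q2R_div, RMicromega.Q2R_1 by exact Hnz. reflexivity.
Qed.

Lemma x5lnx_piece_sound a b l u g :
  x5lnx_piece_ok a b l u = true -> 0 < Q2R a -> Q2R l <= ln (Q2R a) <= Q2R u ->
  Q2R a <= g <= Q2R b -> x5lnx_bracketed g.
Proof.
  unfold x5lnx_piece_ok. intros [Hlo Hhi]%andb_true_iff Ha Hln Hg.
  apply RMicromega.Qle_true in Hlo, Hhi. rewrite RMicromega.Q2R_0 in Hlo, Hhi.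
  set (v := g / Q2R a - 1).
  assert (Hga : peval [a; a] v = g) by (cbn [peval]; unfold v; field; lra).
  assert (Hv : 0 <= v <= Q2R (Qred (b / a - 1))).
  { rewrite Q2R_Qred, Q2R_ratio by exact Ha. unfold v. split.
    - assert (Hdiv : 1 <= g / Q2R a) by (apply Rcomplements.Rle_div_r; lra). lra.
    - apply Rplus_le_compat_r, Rmult_le_compat_r; [apply Rlt_le, Rinv_0_lt_compat|]; lra. }
  apply (fun H => Rle_trans _ _ _ H (horner_lbound_le _ _ v Hv)) in Hlo, Hhi.
  rewrite !peval_padd, !peval_pscale, !peval_pmul, !peval_padd, !peval_pcomp, Hga,
    peval_pmonom, RMicromega.Q2R_1 in Hlo, Hhi.
  cbn [peval] in Hlo, Hhi. rewrite Q2R_neg1 in Hlo, Hhi.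
  assert (Hln_g : ln g = ln (Q2R a) + ln (1 + v)) by (apply ln_ratio; lra).
  pose proof (ln1p_taylor_even_le 10 v eq_refl (proj1 Hv)) as Hev.
  pose proof (ln1p_taylor_odd_ge 11 v eq_refl (proj1 Hv)) as Hod.
  assert (Hg5 : 0 <= g ^ 5) by (apply pow_le; lra).
  unfold x5lnx_bracketed. rewrite Hln_g. split.
  - enough (g ^ 5 * (Q2R l + peval (ln1p_taylor 10) v) <= g ^ 5 * (ln (Q2R a) + ln (1 + v))) by lra.
    apply Rmult_le_compat_l; lra.
  - enough (g ^ 5 * (ln (Q2R a) + ln (1 + v)) <= g ^ 5 * (Q2R u + peval (ln1p_taylor 11) v)) by lra.
    apply Rmult_le_compat_l; lra.
Qed.

Lemma ln_node_step a b : 0 < Q2R a < Q2R b ->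
  ln (Q2R a) + Q2R (qeval (ln1p_taylor 30) (b / a - 1)) <= ln (Q2R b) <=
  ln (Q2R a) + Q2R (qeval (ln1p_taylor 31) (b / a - 1)).
Proof.
  intros Hab. rewrite !Q2R_qeval, Q2R_ratio by lra.
  assert (Hr : 0 <= Q2R b / Q2R a - 1).
  { enough (1 <= Q2R b / Q2R a) by lra. apply Rcomplements.Rle_div_r; lra. }
  rewrite (ln_ratio (Q2R a) (Q2R b)) by lra.
  pose proof (ln1p_taylor_even_le 30 _ eq_refl Hr).
  pose proof (ln1p_taylor_odd_ge 31 _ eq_refl Hr). lra.
Qed.

Definition ln_enclosed (s : Q * Q * Q) : Prop :=
  let '(a, l, u) := s in 0 < Q2R a /\ Q2R l <= ln (Q2R a) <= Q2R u.

Definition ln_step (s s' : Q * Q * Q) : bool :=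
  let '(a, la, ua) := s in
  let '(b, lb, ub) := s' in
  if Qltb a b then
    Qle_bool lb (la + qeval (ln1p_taylor 30) (b / a - 1)) &&
    Qle_bool (ua + qeval (ln1p_taylor 31) (b / a - 1)) ub &&
    x5lnx_piece_ok a b la ua
  else
    Qltb 0 b && Qltb b a &&
    Qle_bool lb (la - qeval (ln1p_taylor 31) (a / b - 1)) &&
    Qle_bool (ua - qeval (ln1p_taylor 30) (a / b - 1)) ub &&
    x5lnx_piece_ok b a lb ub.

Definition node (s : Q * Q * Q) : R := let '(a, _, _) := s in Q2R a.

Lemma ln_step_sound s s' : ln_enclosed s -> ln_step s s' = true ->
  ln_enclosed s' /\ forall g, Rmin (node s) (node s') <= g <= Rmax (node s) (node s') ->
  x5lnx_bracketed g.
Proof.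
  destruct s as [[a la] ua], s' as [[b lb] ub]. cbn [ln_enclosed ln_step node].
  intros [Ha Hla] Hstep. destruct (Qltb a b) eqn:Hab.
  - apply Qltb_R in Hab.
    apply andb_true_iff in Hstep as [[Hlb Hub]%andb_true_iff Hpiece].
    apply RMicromega.Qle_true in Hlb, Hub. rewrite Q2R_plus in Hlb, Hub.
    pose proof (ln_node_step a b (conj Ha Hab)).
    split; [split; lra|].
    intros g Hg. rewrite Rmin_left, Rmax_right in Hg by lra.
    exact (x5lnx_piece_sound a b la ua g Hpiece Ha Hla Hg).
  - apply andb_true_iff in Hstep
      as [[[[Hb Hba]%andb_true_iff Hlb]%andb_true_iff Hub]%andb_true_iff Hpiece].
    apply Qltb_R in Hb, Hba. rewrite RMicromega.Q2R_0 in Hb.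
    apply RMicromega.Qle_true in Hlb, Hub. rewrite Q2R_minus in Hlb, Hub.
    pose proof (ln_node_step b a (conj Hb Hba)).
    assert (Hlnb : Q2R lb <= ln (Q2R b) <= Q2R ub) by lra.
    split; [split; assumption|].
    intros g Hg. rewrite Rmin_right, Rmax_left in Hg by lra.
    exact (x5lnx_piece_sound b a lb ub g Hpiece Hb Hlnb Hg).
Qed.

(* Nodes (a, l, u) with l <= ln a <= u, chained from (1, 0, 0) up to 9 and down to 5/512. *)
Definition ln_nodes_up : list (Q * Q * Q) :=
  [((95#64),(13897609121797#35184372088832),(111180872975957#281474976710656));
   ((133#64),(205889387941111#281474976710656),(205889387942697#281474976710656));
   ((93#32),(75073851061781#70368744177664),(300295404248715#281474976710656));
   ((31#8),(190635354445281#140737488355328),(190635354446077#140737488355328));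
   ((317#64),(450365223648975#281474976710656),(56295652956321#35184372088832));
   ((405#64),(519322453355133#281474976710656),(519322453356727#281474976710656));
   ((499#64),(578071637082049#281474976710656),(144517909270911#70368744177664));
   ((283#32),(613534101508453#281474976710656),(613534101510049#281474976710656));
   ((9#1),(154615934183177#70368744177664),(618463736734305#281474976710656))].

Definition ln_nodes_down : list (Q * Q * Q) :=
  [((5#8),(-132294261038485#281474976710656),(-132294259834095#281474976710656));
   ((11#32),(-18786149676771#17592186044416),(-300560345891219#281474976710656));
   ((3#16),(-58900586363171#35184372088832),(-235577383143675#140737488355328));
   ((23#256),(-740030113236735#281474976710656),(-619572158790737#281474976710656));
   ((11#256),(-1016863666133139#281474976710656),(-761657352480321#281474976710656));
   ((21#1024),(-325867949176729#70368744177664),(-447957667986945#140737488355328));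
   ((5#512),(-1602195177779107#281474976710656),(-1020357197466253#281474976710656))].

Lemma ln_nodes_ok :
  chain_ok ln_step (1, 0, 0)%Q ln_nodes_up = true /\
  chain_ok ln_step (1, 0, 0)%Q ln_nodes_down = true.
Proof. vm_compute. split; reflexivity. Qed.

Lemma x5lnx_bracketed_on_chain s' l : chain_ok ln_step (1, 0, 0)%Q (s' :: l) = true ->
  forall g, Rmin 1 (node (last l s')) <= g <= Rmax 1 (node (last l s')) -> x5lnx_bracketed g.
Proof.
  intros Hok g Hg.
  apply (chain_cover _ node ln_enclosed ln_step x5lnx_bracketed
    (fun s s' H Hs => proj1 (ln_step_sound s s' H Hs))
    (fun s s' x H Hs => proj2 (ln_step_sound s s' H Hs) x) l _ _ Hok).
  - cbn. rewrite RMicromega.Q2R_0, RMicromega.Q2R_1, ln_1. lra.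
  - cbn [node]. rewrite RMicromega.Q2R_1. exact Hg.
Qed.

Definition x5lnx_bottom : Q := 5 # 512.

Lemma x5lnx_bottom_ok :
  nonneg_on (padd (padd (pmonom 5 1) (pmonom 4 (-1))) (pscale (-1) x5lnx_lower)) 0 x5lnx_bottom &&
  nonneg_on x5lnx_upper 0 x5lnx_bottom = true.
Proof. vm_compute. reflexivity. Qed.

(* Near 0 we only use g^5 - g^4 <= g^5 ln g <= 0, i.e. 1 - 1/g <= ln g <= 0. *)
Lemma x5lnx_bracketed_near_0 g : 0 < g <= Q2R x5lnx_bottom -> x5lnx_bracketed g.
Proof.
  intros Hg. destruct (andb_prop _ _ x5lnx_bottom_ok) as [Hlo Hhi].
  assert (Hg' : Q2R 0 <= g <= Q2R x5lnx_bottom) by (rewrite RMicromega.Q2R_0; lra).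
  apply (fun H => nonneg_on_sound _ _ _ _ H Hg') in Hlo, Hhi.
  rewrite !peval_padd, !peval_pscale, !peval_pmonom, RMicromega.Q2R_1, Q2R_neg1 in Hlo.
  assert (Hbot : Q2R x5lnx_bottom < 1) by (unfold Q2R, x5lnx_bottom; simpl; lra).
  assert (Hln_le : ln g <= 0) by (rewrite <- ln_1; apply ln_le; lra).
  assert (Hln_ge : 1 - / g <= ln g).
  { pose proof (exp_ineq1_le (ln (/ g))) as H.
    rewrite exp_ln, ln_Rinv in H by (try apply Rinv_0_lt_compat; lra). lra. }
  assert (Hg5 : 0 <= g ^ 5) by (apply pow_le; lra).
  assert (Hlow : g ^ 5 * (1 - / g) <= g ^ 5 * ln g) by (apply Rmult_le_compat_l; lra).
  replace (g ^ 5 * (1 - / g)) with (g ^ 5 - g ^ 4) in Hlow by (field; lra).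
  unfold x5lnx_bracketed. split; [lra|nra].
Qed.

Lemma x5lnx_bracketed_on g : 0 < g <= 9 -> x5lnx_bracketed g.
Proof.
  intros Hg. destruct ln_nodes_ok as [Hup Hdown].
  unfold ln_nodes_up in Hup. unfold ln_nodes_down in Hdown.
  pose proof (x5lnx_bracketed_on_chain _ _ Hup) as Up.
  pose proof (x5lnx_bracketed_on_chain _ _ Hdown) as Down.
  cbn [last node] in Up, Down. fold x5lnx_bottom in Down.
  replace (Q2R (9 # 1)) with 9 in Up by (unfold Q2R; simpl; field).
  assert (Hbot : 0 < Q2R x5lnx_bottom < 1) by (unfold Q2R, x5lnx_bottom; simpl; lra).
  rewrite Rmin_left, Rmax_right in Up by lra. rewrite Rmin_right, Rmax_left in Down by lra.
  destruct (Rle_lt_dec g (Q2R x5lnx_bottom)); [apply x5lnx_bracketed_near_0; lra|].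
  destruct (Rle_lt_dec g 1); [apply Down|apply Up]; lra.
Qed.

Fixpoint cheb_pair (n : nat) : list Q * list Q :=
  match n with
  | O => ([1%Q], [0%Q; 1%Q])
  | S n' => let (a, b) := cheb_pair n' in (b, padd (pmul [0%Q; 2%Q] b) (pscale (-1) a))
  end.

Definition cheb (n : nat) : list Q := fst (cheb_pair n).

Lemma peval_cheb n th : peval (cheb n) (cos th) = cos (INR n * th).
Proof.
  enough (H : peval (fst (cheb_pair n)) (cos th) = cos (INR n * th) /\
              peval (snd (cheb_pair n)) (cos th) = cos (INR (S n) * th)) by apply H.
  induction n as [|n [IH1 IH2]]; cbn [cheb_pair fst snd peval].
  - rewrite RMicromega.Q2R_0, RMicromega.Q2R_1. simpl.
    rewrite Rmult_0_l, Rmult_1_l, cos_0. split; ring.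
  - destruct (cheb_pair n) as [a b]. cbn [fst snd] in *. split; [exact IH2|].
    rewrite peval_padd, peval_pmul, peval_pscale, IH1, IH2. cbn [peval].
    rewrite RMicromega.Q2R_0, Q2R_neg1. replace (Q2R 2) with 2 by (unfold Q2R; simpl; field).
    rewrite !S_INR.
    replace ((INR n + 1 + 1) * th) with ((INR n + 1) * th + th) by ring.
    replace (INR n * th) with ((INR n + 1) * th - th) by ring.
    rewrite cos_plus, cos_minus. ring.
Qed.

Definition G_cheb (e : Q) : list Q :=
  padd (padd [3%Q] (pscale 2 (cheb 1))) (pscale (2 * e) (padd (cheb 6) (cheb 7))).

Definition cos2pi (x : R) : R := cos (2 * PI * x).

Lemma sqnorm_trinomial (e a : R) : e * e = 1 ->
  (1 + cos a + e * cos (7 * a)) ^ 2 + (0 + sin a + e * sin (7 * a)) ^ 2 =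
  3 + 2 * cos a + 2 * e * (cos (6 * a) + cos (7 * a)).
Proof.
  intros He. replace (6 * a) with (7 * a - a) by ring. rewrite cos_minus.
  pose proof (sin2_cos2 a). pose proof (sin2_cos2 (7 * a)). unfold Rsqr in *. nra.
Qed.

Lemma peval_G_cheb e x :
  peval (G_cheb e) (cos2pi x) = 3 + 2 * cos (2 * PI * x) +
    2 * Q2R e * (cos (6 * (2 * PI * x)) + cos (7 * (2 * PI * x))).
Proof.
  unfold G_cheb, cos2pi. rewrite !peval_padd, !peval_pscale, !peval_padd, !peval_cheb.
  cbn [peval]. rewrite Q2R_mult. replace (Q2R 2) with 2 by (unfold Q2R; simpl; field).
  replace (Q2R 3) with 3 by (unfold Q2R; simpl; field).
  rewrite !INR_IZR_INZ. cbn [Z.of_nat Pos.of_succ_nat Pos.succ].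
  rewrite Rmult_1_l. ring.
Qed.

Lemma Gminus_cheb x : Gminus x = peval (G_cheb (-1)) (cos2pi x).
Proof.
  rewrite peval_G_cheb, Q2R_neg1, <- (sqnorm_trinomial (-1)); [|ring].
  unfold Gminus, cis. rewrite Cmod2_alt. cbn [Re Im Cplus Copp RtoC fst snd].
  replace (14 * PI * x) with (7 * (2 * PI * x)) by ring. f_equal; f_equal; ring.
Qed.

Lemma Gplus_cheb x : Gplus x = peval (G_cheb 1) (cos2pi x).
Proof.
  rewrite peval_G_cheb, RMicromega.Q2R_1, <- (sqnorm_trinomial 1); [|ring].
  unfold Gplus, cis. rewrite Cmod2_alt. cbn [Re Im Cplus Copp RtoC fst snd].
  replace (14 * PI * x) with (7 * (2 * PI * x)) by ring. f_equal; f_equal; ring.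
Qed.

Definition G_range_ok (e : Q) (pts_lo pts_hi : list Q) : bool :=
  nonneg_chain (padd (G_cheb e) [(- (1 # 100))%Q]) (-1) 1 pts_lo &&
  nonneg_chain (padd [9%Q] (pscale (-1) (G_cheb e))) (-1) 1 pts_hi.

Lemma G_range_sound e pts_lo pts_hi x : G_range_ok e pts_lo pts_hi = true ->
  0 < peval (G_cheb e) (cos2pi x) <= 9.
Proof.
  unfold G_range_ok. intros [Hlo Hhi]%andb_true_iff.
  assert (Hc : Q2R (-1) <= cos2pi x <= Q2R 1).
  { rewrite Q2R_neg1, RMicromega.Q2R_1. apply COS_bound. }
  apply (fun H => nonneg_chain_sound _ _ _ _ _ H Hc) in Hlo, Hhi.
  rewrite peval_padd in Hlo, Hhi. rewrite peval_pscale in Hhi. cbn [peval] in Hlo, Hhi.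
  rewrite Q2R_opp in Hlo. rewrite Q2R_neg1 in Hhi.
  replace (Q2R (1 # 100)) with (1 / 100) in Hlo by (unfold Q2R; simpl; field).
  replace (Q2R 9) with 9 in Hhi by (unfold Q2R; simpl; field). lra.
Qed.

Lemma G_range_checks :
  G_range_ok (-1)
    ([-31#32; -29#32; -25#32; -21#32; -17#32; -15#32; -7#16; -13#32; -25#64; -3#8;
     -47#128; -23#64; -11#32; -3#32; 5#32; 13#32; 17#32; 19#32; 27#32; 1])%Q
    ([-7#8; -5#8; -3#8; -1#8; 1#8; 3#8; 5#8; 3#4; 13#16; 27#32; 7#8; 29#32; 1])%Q &&
  G_range_ok 1
    ([-15#16; -7#8; -13#16; -25#32; -3#4; -11#16; -7#16; -3#16; -1#16; 0; 1#16; 1#8;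
     3#8; 5#8; 3#4; 13#16; 7#8; 1])%Q
    ([-3#4; -1#2; -1#4; 0; 1#4; 3#8; 1#2; 5#8; 7#8; 1])%Q = true.
Proof. vm_compute. reflexivity. Qed.

Lemma Gminus_range x : 0 < Gminus x <= 9.
Proof.
  rewrite Gminus_cheb. apply (G_range_sound _ _ _ _ (proj1 (andb_prop _ _ G_range_checks))).
Qed.

Lemma Gplus_range x : 0 < Gplus x <= 9.
Proof.
  rewrite Gplus_cheb. apply (G_range_sound _ _ _ _ (proj2 (andb_prop _ _ G_range_checks))).
Qed.

Fixpoint wallis_pair (n : nat) : Q * Q :=
  match n with
  | O => (1 # 2, 0)%Q
  | S n' => let (a, b) := wallis_pair n' in
            (b, Qred (a * (inject_Z (Z.of_nat (S n')) / inject_Z (Z.of_nat (S (S n'))))))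
  end.

Definition wallis (n : nat) : Q := fst (wallis_pair n).

Lemma wallis_SS n : Q2R (wallis (S (S n))) = INR (S n) / INR (S (S n)) * Q2R (wallis n).
Proof.
  unfold wallis. cbn [wallis_pair]. destruct (wallis_pair n) as [a b]. cbn [fst].
  assert (Hnat : forall k, Q2R (inject_Z (Z.of_nat k)) = INR k).
  { intro k. unfold Q2R, inject_Z; cbn [Qnum Qden]. rewrite INR_IZR_INZ. field. }
  assert (HS : INR (S (S n)) <> 0) by (apply not_0_INR; lia).
  rewrite Q2R_Qred, Q2R_mult, Q2R_div, !Hnat; [field; exact HS|].
  intro E. apply Qeq_eqR in E. rewrite Hnat, RMicromega.Q2R_0 in E. exact (HS E).
Qed.

Lemma is_RInt_ext_R (f g : R -> R) (a b l l' : R) :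
  is_RInt f a b l -> (forall x, f x = g x) -> l = l' -> is_RInt g a b l'.
Proof. intros H Hfg <-. exact (is_RInt_ext f g a b l (fun x _ => Hfg x) H). Qed.

Lemma is_RInt_scal_plus (f g : R -> R) (a b If Ig k l : R) :
  is_RInt f a b If -> is_RInt g a b Ig ->
  is_RInt (fun x => k * f x + l * g x) a b (k * If + l * Ig).
Proof.
  intros Hf Hg.
  exact (is_RInt_plus _ _ _ _ _ _ (is_RInt_scal _ _ _ k _ Hf) (is_RInt_scal _ _ _ l _ Hg)).
Qed.

Lemma is_RInt_derive_R (F dF : R -> R) (a b : R) :
  (forall x, is_derive F x (dF x)) -> (forall x, ex_derive dF x) -> is_RInt dF a b (F b - F a).
Proof.
  intros HF HdF. apply (is_RInt_derive (V := R_CompleteNormedModule)); [intros; apply HF|].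
  intros x _. apply (ex_derive_continuous (K := R_AbsRing) (V := R_NormedModule)), HdF.
Qed.

(* Integrate the derivative of sin (2 pi x) cos (2 pi x)^(n+1), which vanishes at 0 and 1/2. *)
Lemma is_RInt_cos2pi_pow_SS n W : is_RInt (fun x => cos2pi x ^ n) 0 (1 / 2) W ->
  is_RInt (fun x => cos2pi x ^ S (S n)) 0 (1 / 2) (INR (S n) / INR (S (S n)) * W).
Proof.
  intros HW. pose proof PI_RGT_0 as Hpi.
  set (F := fun x => sin (2 * PI * x) * cos2pi x ^ S n).
  set (dF := fun x => 2 * PI * (INR (S (S n)) * cos2pi x ^ S (S n) - INR (S n) * cos2pi x ^ n)).
  assert (HdF : is_RInt dF 0 (1 / 2) (F (1 / 2) - F 0)).
  { apply is_RInt_derive_R.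
    - intro x. unfold F, dF, cos2pi. auto_derive; [auto|].
      pose proof (sin2_cos2 (2 * PI * x)) as E. unfold Rsqr in E. cbn [Init.Nat.pred pow].
      change (match n with 0%nat => 1 | S _ => INR n + 1 end) with (INR (S n)).
      rewrite !S_INR. set (c := cos (2 * PI * x)) in *. set (s := sin (2 * PI * x)) in *.
      transitivity (2 * PI * (c * c * c ^ n) - 2 * PI * (INR n + 1) * c ^ n * (s * s)); [ring|].
      replace (s * s) with (1 - c * c) by lra. ring.
    - intro x. unfold dF, cos2pi. auto_derive. auto. }
  replace (F (1 / 2) - F 0) with 0 in HdF.
  2:{ unfold F. replace (2 * PI * (1 / 2)) with PI by field.
      rewrite Rmult_0_r, sin_PI, sin_0. ring. }
  assert (HS : 0 < INR (S (S n))) by (apply lt_0_INR; lia).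
  apply (is_RInt_ext_R _ _ _ _ _ _ (is_RInt_scal_plus _ _ _ _ _ _
    (/ (2 * PI * INR (S (S n)))) (INR (S n) / INR (S (S n))) HdF HW)).
  - intro x. unfold dF. field. lra.
  - ring.
Qed.

Lemma is_RInt_cos2pi_pow n : is_RInt (fun x => cos2pi x ^ n) 0 (1 / 2) (Q2R (wallis n)).
Proof.
  pose proof PI_RGT_0 as Hpi.
  enough (H : is_RInt (fun x => cos2pi x ^ n) 0 (1 / 2) (Q2R (wallis n)) /\
              is_RInt (fun x => cos2pi x ^ S n) 0 (1 / 2) (Q2R (wallis (S n)))) by apply H.
  induction n as [|n [IH1 IH2]]; split; [| |exact IH2|].
  - apply (is_RInt_ext_R _ _ _ _ _ _ (is_RInt_const (V := R_NormedModule) 0 (1 / 2) 1)).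
    + reflexivity.
    + unfold wallis, Q2R; simpl. unfold scal; simpl; unfold mult; simpl. field.
  - assert (H1 : is_RInt (fun x => cos2pi x ^ 1) 0 (1 / 2)
      (sin (2 * PI * (1 / 2)) / (2 * PI) - sin (2 * PI * 0) / (2 * PI))).
    { apply (is_RInt_derive_R (fun x => sin (2 * PI * x) / (2 * PI))); intro x; unfold cos2pi;
        auto_derive; auto. field. lra. }
    apply (is_RInt_ext_R _ _ _ _ _ _ H1); [reflexivity|].
    replace (2 * PI * (1 / 2)) with PI by field. rewrite Rmult_0_r, sin_PI, sin_0.
    unfold wallis; simpl. rewrite RMicromega.Q2R_0. field. lra.
  - rewrite wallis_SS. apply is_RInt_cos2pi_pow_SS, IH1.
Qed.

Fixpoint cos_moments (p : list Q) (k : nat) : Q :=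
  match p with [] => 0%Q | c :: p' => Qred (c * wallis k + cos_moments p' (S k)) end.

Lemma is_RInt_cos_moments p k :
  is_RInt (fun x => cos2pi x ^ k * peval p (cos2pi x)) 0 (1 / 2) (Q2R (cos_moments p k)).
Proof.
  revert k; induction p as [|c p IH]; intro k; cbn [cos_moments peval].
  - apply (is_RInt_ext_R _ _ _ _ _ _ (is_RInt_const (V := R_NormedModule) 0 (1 / 2) 0)).
    + intro x. ring.
    + rewrite RMicromega.Q2R_0. apply Rmult_0_r.
  - apply (is_RInt_ext_R _ _ _ _ _ _
      (is_RInt_scal_plus _ _ _ _ _ _ (Q2R c) 1 (is_RInt_cos2pi_pow k) (IH (S k)))).
    + intro x. simpl. ring.
    + rewrite Q2R_Qred, Q2R_plus, Q2R_mult. ring.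
Qed.

Lemma is_RInt_peval_cos2pi p :
  is_RInt (fun x => peval p (cos2pi x)) 0 (1 / 2) (Q2R (cos_moments p 0)).
Proof.
  apply (is_RInt_ext_R _ _ _ _ _ _ (is_RInt_cos_moments p 0));
    [intro x; apply Rmult_1_l|reflexivity].
Qed.

Lemma rpow_exp a t : 0 < a -> rpow a t = exp (t * ln a).
Proof. intro Ha. unfold rpow. destruct (Req_EM_T a 0); [lra|reflexivity]. Qed.

Lemma rpow_INR a n : 0 < a -> rpow a (INR n) = a ^ n.
Proof.
  intro Ha. rewrite <- Rpower_pow by exact Ha.
  unfold rpow. destruct (Req_EM_T a 0); [lra|reflexivity].
Qed.

Section RpowIntegral.

Variables (G : R -> R) (a b : R).
Hypothesis G_pos : forall x, 0 < G x.
Hypothesis G_cont : forall x, continuous G x.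

Lemma continuous_ln_comp x : continuous (fun y => ln (G y)) x.
Proof. apply (continuous_comp G ln); [apply G_cont|apply continuous_ln, G_pos]. Qed.

Lemma continuous_rpow_comp t x : continuous (fun y => rpow (G y) t) x.
Proof.
  apply (continuous_ext (fun y => exp (t * ln (G y)))); [intro y; symmetry; apply rpow_exp, G_pos|].
  apply continuous_exp_comp, (continuous_mult (K := R_AbsRing) (fun _ => t));
    [apply continuous_const|apply continuous_ln_comp].
Qed.

Lemma ex_RInt_rpow_comp t : ex_RInt (fun x => rpow (G x) t) a b.
Proof.
  apply (ex_RInt_continuous (V := R_CompleteNormedModule)). intros x _. apply continuous_rpow_comp.
Qed.

Lemma is_derive_RInt_rpow t :
  is_derive (fun s => RInt (fun x => rpow (G x) s) a b) t
    (RInt (fun x => rpow (G x) t * ln (G x)) a b).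
Proof.
  assert (Hd : forall s x, is_derive (fun u => rpow (G x) u) s (rpow (G x) s * ln (G x))).
  { intros s x. apply (is_derive_ext (fun u => exp (u * ln (G x))));
      [intro; symmetry; apply rpow_exp, G_pos|].
    rewrite rpow_exp by apply G_pos. auto_derive; [auto|ring]. }
  assert (HD : forall s x, Derive (fun u => rpow (G x) u) s = exp (s * ln (G x)) * ln (G x)).
  { intros s x. rewrite <- rpow_exp by apply G_pos. apply is_derive_unique, Hd. }
  replace (RInt (fun x => rpow (G x) t * ln (G x)) a b) with
    (RInt (fun x => Derive (fun u => rpow (G x) u) t) a b)
    by (apply RInt_ext; intros x _; rewrite HD, rpow_exp by apply G_pos; reflexivity).
  apply is_derive_RInt_param.
  - apply filter_forall. intros s x _. eexists. apply Hd.
  - intros x _. apply (continuity_2d_pt_ext (fun u v => exp (u * ln (G v)) * ln (G v)));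
      [intros u v; symmetry; apply HD|].
    assert (Hln : continuity_2d_pt (fun _ v => ln (G v)) t x).
    { apply (continuity_1d_2d_pt_comp (fun v => ln (G v)) (fun _ v => v));
        [apply continuity_pt_filterlim, continuous_ln_comp|apply continuity_2d_pt_id2]. }
    apply continuity_2d_pt_mult; [|exact Hln].
    apply (continuity_1d_2d_pt_comp exp); [apply continuity_pt_filterlim, continuous_exp|].
    apply continuity_2d_pt_mult; [apply continuity_2d_pt_id1|exact Hln].
  - apply filter_forall. intro s. apply ex_RInt_rpow_comp.
Qed.

End RpowIntegral.

Lemma continuous_peval_cos2pi q x : continuous (fun y => peval q (cos2pi y)) x.
Proof.
  apply (continuous_comp cos2pi (peval q)); [|apply continuous_peval].
  apply (continuous_comp (fun y => 2 * PI * y) cos); [|apply continuous_cos].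
  apply (continuous_mult (K := R_AbsRing) (fun _ => 2 * PI));
    [apply continuous_const|apply continuous_id].
Qed.

Lemma RInt_x5lnx_bracket (G : R -> R) (q : list Q) :
  (forall x, G x = peval q (cos2pi x)) -> (forall x, 0 < G x <= 9) ->
  Q2R (cos_moments (pcomp x5lnx_lower q) 0) <= RInt (fun x => rpow (G x) 5 * ln (G x)) 0 (1 / 2) <=
  Q2R (cos_moments (pcomp x5lnx_upper q) 0).
Proof.
  intros HG Hrange.
  assert (Gpos : forall x, 0 < G x) by apply Hrange.
  assert (Gcont : forall x, continuous G x).
  { intro x. apply (continuous_ext (fun y => peval q (cos2pi y))); [intro; symmetry; apply HG|].
    apply continuous_peval_cos2pi. }
  assert (Hint : ex_RInt (fun x => rpow (G x) 5 * ln (G x)) 0 (1 / 2)).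
  { apply (ex_RInt_continuous (V := R_CompleteNormedModule)). intros x _.
    apply (continuous_mult (K := R_AbsRing) (fun y => rpow (G y) 5));
      [apply continuous_rpow_comp|apply continuous_ln_comp]; assumption. }
  assert (Hx5 : forall x, rpow (G x) 5 * ln (G x) = G x ^ 5 * ln (G x)).
  { intro x. replace 5 with (INR 5) by (simpl; ring). rewrite rpow_INR by apply Gpos. reflexivity. }
  pose proof (fun x => x5lnx_bracketed_on (G x) (Hrange x)) as Hbr.
  split.
  - rewrite <- (is_RInt_unique _ _ _ _ (is_RInt_peval_cos2pi (pcomp x5lnx_lower q))).
    apply RInt_le; [lra|eexists; apply is_RInt_peval_cos2pi|exact Hint|].
    intros x _. rewrite peval_pcomp, <- HG, Hx5. apply Hbr.
  - rewrite <- (is_RInt_unique _ _ _ _ (is_RInt_peval_cos2pi (pcomp x5lnx_upper q))).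
    apply RInt_le; [lra|exact Hint|eexists; apply is_RInt_peval_cos2pi|].
    intros x _. rewrite peval_pcomp, <- HG, Hx5. apply Hbr.
Qed.

Lemma Gminus_pos x : 0 < Gminus x.
Proof. apply Gminus_range. Qed.

Lemma Gplus_pos x : 0 < Gplus x.
Proof. apply Gplus_range. Qed.

Lemma continuous_Gminus x : continuous Gminus x.
Proof.
  apply (continuous_ext (fun y => peval (G_cheb (-1)) (cos2pi y)));
    [intro; symmetry; apply Gminus_cheb|apply continuous_peval_cos2pi].
Qed.

Lemma continuous_Gplus x : continuous Gplus x.
Proof.
  apply (continuous_ext (fun y => peval (G_cheb 1) (cos2pi y)));
    [intro; symmetry; apply Gplus_cheb|apply continuous_peval_cos2pi].
Qed.

Lemma d_split t :
  d t = RInt (fun x => rpow (Gminus x) t) 0 (1 / 2) - RInt (fun x => rpow (Gplus x) t) 0 (1 / 2).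
Proof.
  apply (RInt_minus (V := R_CompleteNormedModule)).
  - exact (ex_RInt_rpow_comp Gminus 0 (1 / 2) Gminus_pos continuous_Gminus t).
  - exact (ex_RInt_rpow_comp Gplus 0 (1 / 2) Gplus_pos continuous_Gplus t).
Qed.

Lemma x5lnx_integral_brackets_separated :
  Qltb 0 (cos_moments (pcomp x5lnx_lower (G_cheb (-1))) 0 -
          cos_moments (pcomp x5lnx_upper (G_cheb 1)) 0) = true.
Proof. vm_compute. reflexivity. Qed.

Theorem lemma4 : exists l : R, is_derive d 5 l /\ 0 < l.
Proof.
  set (I G := RInt (fun x => rpow (G x) 5 * ln (G x)) 0 (1 / 2)).
  exists (I Gminus - I Gplus). split.
  - apply (is_derive_ext _ _ _ _ (fun t => eq_sym (d_split t))).
    apply (is_derive_minus (K := R_AbsRing) (V := R_NormedModule)).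
    + exact (is_derive_RInt_rpow Gminus 0 (1 / 2) Gminus_pos continuous_Gminus 5).
    + exact (is_derive_RInt_rpow Gplus 0 (1 / 2) Gplus_pos continuous_Gplus 5).
  - destruct (RInt_x5lnx_bracket Gminus (G_cheb (-1)) Gminus_cheb Gminus_range) as [Hminus _].
    destruct (RInt_x5lnx_bracket Gplus (G_cheb 1) Gplus_cheb Gplus_range) as [_ Hplus].
    pose proof (Qltb_R _ _ x5lnx_integral_brackets_separated) as Hpos.
    rewrite RMicromega.Q2R_0, Q2R_minus in Hpos. unfold I. lra.
Qed.
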